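(* Let $X$ be a $d$-complex, $-1\le i\le k<d$, $A\in C^k$ and $0<\eta<1$. Let $\sigma\in S^i_\eta(A)$, $t\in L_\eta(A,\sigma)$, $t'\in A$, and $p\in X(k+1)$ with $t\subset p$ and $t'\subset p$. Then either $t'\cap\sigma$ is a fat face (i.e. $t'\cap\sigma\in S^{|t'\cap\sigma|-1}_\eta(A)$) and $t'\in L_\eta(A,t'\cap\sigma)$, or $p\in\Upsilon_\eta(A)$.
   Context: A $d$-complex is a finite pure $d$-dimensional simplicial complex $X$ (faces are vertex sets, $\emptyset$ is the unique $(-1)$-face, $|\sigma|$ = number of vertices); $X(k)$ = set of $k$-faces; $C^k$ = $\mathbb{F}_2$-cochains identified with subsets of $X(k)$. Weight $w(\sigma)=\frac{|\{F\in X(d):\sigma\subset F\}|}{\binom{d+1}{|\sigma|}|X(d)|}$, norm $\|A\|=\sum_{\sigma\in A}w(\sigma)$. Link $X_\sigma=\{\tau\in X:\tau\cap\sigma=\emptyset,\tau\cup\sigma\in X\}$ with own norm $\|\cdot\|_\sigma$; localization $I_\sigma(A)=\{\tau\in X_\sigma:\tau\sqcup\sigma\in A\}$. Fat faces: $S^k_\eta(A)=A$ and for $i=k,\dots,0$, $S^{i-1}_\eta(A)=\{\sigma\in X(i-1):\|I_\sigma(S^i_\eta(A))\|_\sigma\ge\eta^{2^{k-i}}\}$. A dead-end is a pair $(\sigma,\sigma')$ with $\sigma,\sigma'\in S^j_\eta(A)$ for some $j$, $|\sigma\cap\sigma'|=|\sigma|-1$, and $\sigma\cap\sigma'\notin S^{j-1}_\eta(A)$;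 $\Upsilon_\eta(A)\subset X(k+1)$ is the set of $(k+1)$-faces containing $\sigma\cup\sigma'$ for some dead-end. For $\sigma\in S^i_\eta(A)$, $L_\eta(A,\sigma)=\{t\in A:\exists\,\sigma=\sigma_i\subset\dots\subset\sigma_k=t,\ \sigma_j\in S^j_\eta(A)\ \forall j\}$. *)

From HB Require Import structures.
From mathcomp Require Import all_boot all_order all_algebra.
Set Implicit Arguments. Unset Strict Implicit. Unset Printing Implicit Defensive.
Import Order.TTheory GRing.Theory Num.Theory.

(* A k-face has k+1 vertices, so we index
   everything by the number of vertices ("size") m = k+1 >= 0. *)

Section Defs.
Variable V : finType.
Implicit Types (X Y A B : {set {set V}}) (s t : {set V}).

(* finite pure d-dimensional simplicial complex (finiteness: V is finite) *)
Definition is_dcomplex (X : {set {set V}}) (d : nat) : Prop :=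
  [/\ set0 \in X,
      (forall s t, t \subset s -> s \in X -> t \in X),
      (forall s, s \in X -> #|s| <= d.+1) &
      (forall s, s \in X -> exists2 F, F \in X & (#|F| == d.+1) && (s \subset F))].

(* faces with m vertices, i.e. X(m-1) *)
Definition faces X (m : nat) : {set {set V}} := [set s in X | #|s| == m].

(* weight of tau in a complex Y whose top faces have n vertices (dimension n-1) *)
Definition weight Y (n : nat) (tau : {set V}) : rat :=
  (#|[set F in Y | (#|F| == n) && (tau \subset F)]|%:R /
   ('C(n, #|tau|) * #|faces Y n|)%:R)%R.

Definition norm Y (n : nat) (B : {set {set V}}) : rat :=
  (\sum_(tau in B) weight Y n tau)%R.

Definition link X (sigma : {set V}) : {set {set V}} :=
  [set tau in X | [disjoint tau & sigma] && (tau :|: sigma \in X)].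

(* norm in the link X_sigma, a (d - |sigma|)-complex, i.e. top faces have
   d+1-|sigma| vertices *)
Definition link_norm X (d : nat) sigma B : rat :=
  norm (link X sigma) (d.+1 - #|sigma|) B.

Definition loc X sigma B : {set {set V}} :=
  [set tau in link X sigma | tau :|: sigma \in B].

(* fat_aux r = S^{k-r}_eta(A) (faces with K - r vertices, K = k+1) *)
Fixpoint fat_aux X (d K : nat) (eta : rat) A (r : nat) : {set {set V}} :=
  match r with
  | 0 => A
  | r'.+1 =>
      [set sigma in X | (#|sigma| == K - r'.+1) &&
        (eta ^+ (2 ^ r') <= link_norm X d sigma (loc X sigma (fat_aux X d K eta A r')))%R]
  end.

(* fat X d K eta A m = S^{m-1}_eta(A), for A in C^{K-1}, for 0 <= m <= K *)
Definition fat X d K eta A (m : nat) : {set {set V}} :=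
  if m <= K then fat_aux X d K eta A (K - m) else set0.

Definition dead_end X d K eta A (s s' : {set V}) : Prop :=
  exists m : nat, [/\ 0 < m, s \in fat X d K eta A m, s' \in fat X d K eta A m,
     #|s :&: s'|.+1 = #|s| & (s :&: s') \notin fat X d K eta A m.-1].

Definition Upsilon X d K eta A (p : {set V}) : Prop :=
  p \in faces X K.+1 /\
  exists s s', dead_end X d K eta A s s' /\ (s :|: s') \subset p.

Definition inL X d K eta A (sigma t : {set V}) : Prop :=
  t \in A /\
  exists c : nat -> {set V},
    [/\ c #|sigma| = sigma, c K = t,
        (forall m, #|sigma| <= m <= K -> c m \in fat X d K eta A m) &
        (forall m, #|sigma| <= m < K -> c m \subset c m.+1)].

End Defs.

From HB Require Import structures.
From mathcomp Require Import all_boot all_order all_algebra zify.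
From Stdlib Require Import Classical.
Import Order.TTheory GRing.Theory Num.Theory.

Set Implicit Arguments.
Unset Strict Implicit.

(* [lia] is exponentially slow in the number of boolean hypotheses (set
   memberships and inclusions here), so they are cleared first. *)
Ltac nat_lia :=
  repeat match goal with
  | H : is_true ?b |- _ =>
      lazymatch b with
      | (_ <= _)%N => fail
      | (_ && _) => fail
      | ~~ (_ == _) => fail
      | _ => clear H
      end
  end; lia.

(* If [t = t'] the chain witnessing [t \in L(A, sigma)] already works.
   Otherwise [t] and [t'] are two [k]-faces of the [(k+1)]-face [p], so
   [t' = p \ v] for a vertex [v] of [t].  If [p] contains no dead-end, then
   deleting [v] from every face of the chain [sigma = c_i ⊂ ... ⊂ c_k = t]
   that contains it keeps it fat: going down the chain, [c_j] and
   [c_{j+1} \ v] are fat faces of the same dimension inside [p] meeting in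
   [c_j \ v], which must be fat since they do not form a dead-end.  The
   modified chain runs from [sigma \ v = t' ∩ sigma] to [t']. *)

Lemma chain_subset (T : finType) (c : nat -> {set T}) a b :
  (forall m, a <= m < b -> c m \subset c m.+1) ->
  forall n, a <= n <= b -> c n \subset c b.
Proof.
move=> c_sub n; move Hj: (b - n) => j; elim: j n Hj => [|j IH] n Hj hn.
  by have -> : n = b by nat_lia.
by apply: subset_trans (c_sub n _) (IH n.+1 _ _); nat_lia.
Qed.

Section FatFaces.

Variables (V : finType) (X : {set {set V}}) (d K : nat) (eta : rat).
Variable A : {set {set V}}.
Hypothesis A_faces : A \subset faces X K.

Local Notation S := (fat X d K eta A).

Lemma fatK : S K = A.
Proof. by rewrite /fat leqnn subnn. Qed.

Lemma card_A s : s \in A -> #|s| = K.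
Proof. by move/(subsetP A_faces); rewrite inE => /andP[_ /eqP]. Qed.

Lemma card_fat n s : s \in S n -> #|s| = n /\ n <= K.
Proof.
rewrite /fat; case: leqP => hn; last by rewrite inE.
case E: (K - n) => [|r] /=.
  by move/card_A ->; split; nat_lia.
by rewrite inE => /andP[_ /andP[/eqP -> _]]; split; nat_lia.
Qed.

Lemma fat_setD1_of_not_Upsilon p s s' v n :
  ~ Upsilon X d K eta A p -> p \in faces X K.+1 ->
  s \in S n.+1 -> s' \in S n.+1 -> v \in s -> s :&: s' = s :\ v ->
  s :|: s' \subset p -> s :\ v \in S n.
Proof.
move=> noU p_face s_fat s'_fat v_s ss' ss'_p; rewrite -ss'.
case: (boolP (s :&: s' \in S n)) => // not_fat; exfalso; apply: noU.
split=> //; exists s, s'; split=> //; exists n.+1; split=> //.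
by rewrite ss' (cardsD1 v s) v_s.
Qed.

Section Chain.

Variables (sigma t : {set V}) (c : nat -> {set V}).
Hypotheses (sigma_K : #|sigma| <= K) (c_bot : c #|sigma| = sigma) (c_top : c K = t).
Hypothesis c_fat : forall m, #|sigma| <= m <= K -> c m \in S m.
Hypothesis c_sub : forall m, #|sigma| <= m < K -> c m \subset c m.+1.

Lemma chain_subset_top n : #|sigma| <= n <= K -> c n \subset t.
Proof. by rewrite -c_top; apply: chain_subset. Qed.

Lemma sigma_subset_top : sigma \subset t.
Proof. by rewrite -{1}c_bot; apply: chain_subset_top; nat_lia. Qed.

Lemma top_in_A : t \in A.
Proof. by rewrite -fatK -c_top; apply: c_fat; rewrite sigma_K leqnn. Qed.

Lemma card_chain n : #|sigma| <= n <= K -> #|c n| = n.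
Proof. by move/c_fat/card_fat => []. Qed.

Section Reroute.

Variables (p t' : {set V}) (v : V).
Hypotheses (noU : ~ Upsilon X d K eta A p) (p_face : p \in faces X K.+1).
Hypotheses (t_p : t \subset p) (t'_p : t' \subset p).
Hypotheses (t'_A : t' \in A) (v_t : v \in t) (v_t' : v \notin t').
Hypothesis t_t' : t :\ v \subset t'.

Lemma setI_top : t :&: t' = t :\ v.
Proof.
apply/eqP; rewrite eqEsubset subsetI subsetDl t_t' andbT.
by rewrite subsetD1 subsetIl inE (negbTE v_t') andbF.
Qed.

Lemma chain_setD1_fat n : #|sigma| <= n.+1 <= K -> v \in c n.+1 -> c n.+1 :\ v \in S n.
Proof.
move Hj: (K - n.+1) => j; elim: j n Hj => [|j IH] n Hj hn v_c.
  have nK : n.+1 = K by nat_lia.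
  rewrite nK c_top; apply: (fat_setD1_of_not_Upsilon (p := p) (s' := t')); rewrite ?nK ?fatK //.
  - exact: top_in_A.
  - exact: setI_top.
  - by rewrite subUset t_p t'_p.
have c_n1 : c n.+1 \subset c n.+2 by apply: c_sub; nat_lia.
apply: (fat_setD1_of_not_Upsilon (p := p) (s' := c n.+2 :\ v)) => //.
- by apply: c_fat; nat_lia.
- by apply: (IH n.+1); [nat_lia | nat_lia | exact: subsetP c_n1 _ v_c].
- by rewrite setIDA (setIidPl c_n1).
rewrite subUset (subset_trans (subsetDl _ _)) ?andbT;
  by apply: subset_trans t_p; apply: chain_subset_top; nat_lia.
Qed.

Lemma card_sigma_le n : #|sigma :\ v| <= n -> v \notin c n.+1 -> #|sigma| <= n.
Proof.
move=> hn v_c; case: (leqP #|sigma| n) => // lt_n.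
have := cardsD1 v sigma; case: (boolP (v \in sigma)) => v_sigma /= card_sigma; last by nat_lia.
by move: v_c; rewrite (_ : n.+1 = #|sigma|) ?c_bot ?v_sigma //; nat_lia.
Qed.

Definition reroute n :=
  if n == K then t' else if v \in c n.+1 then c n.+1 :\ v else c n.

Lemma reroute_fat n : #|sigma :\ v| <= n <= K -> reroute n \in S n.
Proof.
move=> hn; have := cardsD1 v sigma; rewrite /reroute => card_sigma.
case: eqP => [->|nK]; first by rewrite fatK.
case: ifPn => v_c; first by apply: chain_setD1_fat => //; nat_lia.
by apply: c_fat; have := card_sigma_le (proj1 (andP hn)) v_c; nat_lia.
Qed.

Lemma card_sigmaD1_lt : #|sigma :\ v| < K.
Proof.
rewrite -(card_A top_in_A); apply: proper_card.
exact: sub_proper_trans (setSD _ sigma_subset_top) (properD1 v_t).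
Qed.

Lemma reroute_bot : reroute #|sigma :\ v| = sigma :\ v.
Proof.
rewrite /reroute ltn_eqF ?card_sigmaD1_lt //.
have := cardsD1 v sigma; case: (boolP (v \in sigma)) => v_sigma /= card_sigma.
  by rewrite (_ : _.+1 = #|sigma|) ?c_bot ?v_sigma //; nat_lia.
have sigmaD1 : sigma :\ v = sigma by apply/setDidPl; rewrite disjoint_sym disjoints1.
rewrite sigmaD1; case: ifPn => v_c; last by rewrite c_bot.
have sigma_K' : #|sigma| < K by rewrite -{1}sigmaD1 card_sigmaD1_lt.
apply/esym/eqP; rewrite eqEcard subsetD1 v_sigma andbT.
rewrite -{1}c_bot c_sub ?sigma_K' ?leqnn //=.
have := cardsD1 v (c #|sigma|.+1); rewrite v_c add1n card_chain => [[<-] //|].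
by rewrite leqnSn sigma_K'.
Qed.

Lemma reroute_sub n : #|sigma :\ v| <= n < K -> reroute n \subset reroute n.+1.
Proof.
move=> hn; have := cardsD1 v sigma => card_sigma.
rewrite /reroute ltn_eqF; last by nat_lia.
case: (eqVneq n.+1 K) => [n1K|n1K].
  by rewrite n1K c_top v_t.
have c_n1 : c n.+1 \subset c n.+2 by apply: c_sub; nat_lia.
case: ifPn => v_c1.
  by rewrite (subsetP c_n1 _ v_c1); apply: setSD.
have sigma_n := card_sigma_le (proj1 (andP hn)) v_c1.
have c_n : c n \subset c n.+1 by apply: c_sub; nat_lia.
case: ifP => _ //; rewrite subsetD1 (subset_trans c_n c_n1) /=.
by apply: contra v_c1; apply: (subsetP c_n).
Qed.

Lemma setI_sigma : t' :&: sigma = sigma :\ v.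
Proof.
rewrite -{1}(setIidPr sigma_subset_top) setIA [t' :&: t]setIC setI_top.
by rewrite setIC setIDA (setIidPl sigma_subset_top).
Qed.

Lemma inL_setI_sigma :
  t' :&: sigma \in S #|t' :&: sigma| /\ inL X d K eta A (t' :&: sigma) t'.
Proof.
have hK := card_sigmaD1_lt; rewrite setI_sigma.
split; first by rewrite -{1}reroute_bot; apply: reroute_fat; nat_lia.
split=> //; exists reroute; split.
- exact: reroute_bot.
- by rewrite /reroute eqxx.
- exact: reroute_fat.
- exact: reroute_sub.
Qed.

End Reroute.
End Chain.
End FatFaces.

Theorem mainTheorem9 (V : finType) (X : {set {set V}}) (d K m : nat)
    (A : {set {set V}}) (eta : rat) (sigma t t' p : {set V}) :
  is_dcomplex X d ->
  K <= d -> m <= K ->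
  A \subset faces X K ->
  (0 < eta)%R -> (eta < 1)%R ->
  sigma \in fat X d K eta A m ->
  inL X d K eta A sigma t ->
  t' \in A ->
  p \in faces X K.+1 -> t \subset p -> t' \subset p ->
  (t' :&: sigma \in fat X d K eta A #|t' :&: sigma| /\
   inL X d K eta A (t' :&: sigma) t')
  \/ Upsilon X d K eta A p.
Proof.
move=> _ _ sigma_K A_faces _ _ sigma_fat [t_A [c [c_bot c_top c_fat c_sub]]] t'_A p_face t_p t'_p.
have [card_sigma _] := card_fat A_faces sigma_fat; subst m.
have [<-|tt'] := eqVneq t t'.
  left; rewrite (setIidPr (sigma_subset_top sigma_K c_bot c_top c_sub)).
  by split=> //; split=> //; exists c.
have [v v_t v_t'] : exists2 v, v \in t & v \notin t'.
  apply/subsetPn; apply: contra tt' => t_t'.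
  by rewrite eqEcard t_t' (card_A A_faces t_A) (card_A A_faces t'_A) leqnn.
have t'_pD1 : t' = p :\ v.
  apply/eqP; rewrite eqEcard subsetD1 t'_p v_t' (card_A A_faces t'_A).
  have := cardsD1 v p; rewrite (subsetP t_p _ v_t) add1n.
  by move: p_face; rewrite inE => /andP[_ /eqP ->] [<-]; rewrite leqnn.
case: (classic (Upsilon X d K eta A p)) => [U_p|noU]; [right | left] => //.
have t_t' : t :\ v \subset t' by rewrite t'_pD1 setSD.
exact: (inL_setI_sigma A_faces sigma_K c_bot c_top c_fat c_sub
  noU p_face t_p t'_p t'_A v_t v_t' t_t').
Qed.
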